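(* Let $\epsilon>0$. For all $\widehat\phi_1,\widehat\phi_2\in\mathcal{M}_\epsilon$ with $\widehat\phi_1\le\widehat\phi_2$ entrywise, one has $\widehat\Psi(\widehat\phi_1)\ge\widehat\Psi(\widehat\phi_2)$ entrywise.
   Context: Discrete setting: $\Omega=(0,1)$, $T>0$, $\sigma>0$; $m_0:[0,1]\to\mathbb{R}$ bounded with $m_0\ge0$. $f:[0,1]\times\mathbb{R}\to\mathbb{R}$ is continuous and nonincreasing in its second variable, bounded, and $f\le0$. For positive integers $I,J$: $\Delta t=T/I$, $\Delta x=1/J$, $x_j=j\Delta x$. $\mathcal{M}$ is the set of real matrices $(m_{i,j})_{0\le i\le I,0\le j\le J}$, $\mathcal{M}_\epsilon=\{m\in\mathcal{M}: m_{i,j}\ge\epsilon\ \forall i,j\}$. For $\widehat\phi\in\mathcal{M}_\epsilon$, $\widehat\Psi(\widehat\phi)$ is the unique $\widehat\psi\in\mathcal{M}$ with $\widehat\psi_{0,j}=m_0(x_j)/\widehat\phi_{0,j}$ and, for $0\le i\le I-1$, $0\le j\le J$, $\frac{\widehat\psi_{i+1,j}-\widehat\psi_{i,j}}{\Delta t}-\frac{\sigma^2}{2}\frac{\widehat\psi_{i+1,j+1}-2\widehat\psi_{i+1,j}+\widehat\psi_{i+1,j-1}}{(\Delta x)^2}=\frac{1}{\sigma^2}f(x_j,\widehat\phi_{i+1,j}\widehat\psi_{i+1,j})\widehat\psi_{i+1,j}$, with conventions $\widehat\psi_{i,-1}=\widehat\psi_{i,0}$, $\widehat\psi_{i,J+1}=\widehat\psi_{i,J}$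 (existence, uniqueness and $\widehat\psi\ge0$ being known). *)

From Stdlib Require Import Reals Lra Lia.
Open Scope R_scope.

(* Grid matrices (m_{i,j})_{0<=i<=I, 0<=j<=J} are represented as functions
   nat -> nat -> R; only entries with i <= I, j <= J are meaningful. *)

(* Neumann-type conventions: psi_{i,-1} = psi_{i,0}, psi_{i,J+1} = psi_{i,J}. *)
Definition nbL (j : nat) : nat := Nat.pred j.
Definition nbR (J j : nat) : nat := if Nat.ltb j J then S j else J.

Definition dt (T : R) (I : nat) : R := T / INR I.
Definition dx (J : nat) : R := 1 / INR J.
Definition xg (J j : nat) : R := INR j * dx J.

Definition in_Meps (eps : R) (I J : nat) (m : nat -> nat -> R) : Prop :=
  forall i j, (i <= I)%nat -> (j <= J)%nat -> eps <= m i j.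

(* psi satisfies the defining scheme of hat Psi(phi); by the (known)
   uniqueness, this means psi = hat Psi(phi). *)
Definition is_Psi (T sigma : R) (I J : nat) (m0 : R -> R) (f : R -> R -> R)
    (phi psi : nat -> nat -> R) : Prop :=
  (forall j, (j <= J)%nat -> psi O j = m0 (xg J j) / phi O j) /\
  (forall i j, (i < I)%nat -> (j <= J)%nat ->
     (psi (S i) j - psi i j) / dt T I
     - sigma ^ 2 / 2 *
       ((psi (S i) (nbR J j) - 2 * psi (S i) j + psi (S i) (nbL j)) / (dx J) ^ 2)
     = / sigma ^ 2 * f (xg J j) (phi (S i) j * psi (S i) j) * psi (S i) j).

From Stdlib Require Import Reals Lra Lia.
Open Scope R_scope.

(* Everything rests on a discrete maximum principle for one step of the
   implicit heat scheme with Neumann conventions: if the old row is <= 0 and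
   the residual of the step is <= 0 wherever the new row is positive, then
   the new row is <= 0 (look at a maximum point of the new row: there the
   time difference is positive and the discrete Laplacian is <= 0).
   Marching in time gives the same statement on the whole grid.

   Since the scheme's residual is linear in the unknown, the principle
   applies to w = -psi (the reaction term f psi / sigma^2 has the right sign
   because f <= 0), giving psi >= 0, and then to w = psi2 - psi1: where
   psi2 > psi1 >= 0, the products phi1 psi1 <= phi2 psi2 and the monotonicity
   of f make the reaction difference nonpositive.  The initial rows compare
   because m0 >= 0 and phi1 <= phi2. *)

Definition implicit_heat (tau c h : R) (J : nat) (u v : nat -> R) (j : nat) : R :=
  (v j - u j) / tau - c * ((v (nbR J j) - 2 * v j + v (nbL j)) / h).

Lemma implicit_heat_sub tau c h J u1 v1 u2 v2 j : 0 < tau -> 0 < h ->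
  implicit_heat tau c h J (fun k => u2 k - u1 k) (fun k => v2 k - v1 k) j
  = implicit_heat tau c h J u2 v2 j - implicit_heat tau c h J u1 v1 j.
Proof. intros; unfold implicit_heat; field; lra. Qed.

Lemma implicit_heat_opp tau c h J u v j : 0 < tau -> 0 < h ->
  implicit_heat tau c h J (fun k => - u k) (fun k => - v k) j
  = - implicit_heat tau c h J u v j.
Proof. intros; unfold implicit_heat; field; lra. Qed.

Lemma exists_max (g : nat -> R) (J : nat) :
  exists j, (j <= J)%nat /\ forall k, (k <= J)%nat -> g k <= g j.
Proof.
  induction J as [|J [j [Hj Hmax]]].
  - exists O; split; [lia|]. intros k Hk. replace k with O by lia. lra.
  - destruct (Rle_dec (g (S J)) (g j)).
    + exists j; split; [lia|]. intros k Hk.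
      destruct (Nat.eq_dec k (S J)) as [->|]; [lra|]. apply Hmax; lia.
    + exists (S J); split; [lia|]. intros k Hk.
      destruct (Nat.eq_dec k (S J)) as [->|]; [lra|].
      specialize (Hmax k ltac:(lia)). lra.
Qed.

Lemma nbR_le J j : (j <= J)%nat -> (nbR J j <= J)%nat.
Proof. unfold nbR; intros; destruct (Nat.ltb_spec j J); lia. Qed.

Lemma nbL_le J j : (j <= J)%nat -> (nbL j <= J)%nat.
Proof. unfold nbL; intros; lia. Qed.

Lemma row_max_principle tau c h J (u v : nat -> R) :
  0 < tau -> 0 <= c -> 0 < h ->
  (forall j, (j <= J)%nat -> u j <= 0) ->
  (forall j, (j <= J)%nat -> 0 < v j -> implicit_heat tau c h J u v j <= 0) ->
  forall j, (j <= J)%nat -> v j <= 0.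
Proof.
  intros Htau Hc Hh Hu Hres j Hj.
  destruct (exists_max v J) as [j0 [Hj0 Hmax]].
  enough (v j0 <= 0) by (specialize (Hmax j Hj); lra).
  apply Rnot_lt_le; intro Hpos.
  assert (Htime : 0 < (v j0 - u j0) / tau)
    by (apply Rdiv_lt_0_compat; [specialize (Hu j0 Hj0); lra | lra]).
  assert (Hlap : (v (nbR J j0) - 2 * v j0 + v (nbL j0)) / h <= 0).
  { assert (HR := Hmax _ (nbR_le J j0 Hj0)). assert (HL := Hmax _ (nbL_le J j0 Hj0)).
    unfold Rdiv. rewrite <- (Rmult_0_l (/ h)).
    apply Rmult_le_compat_r; [left; apply Rinv_0_lt_compat |]; lra. }
  assert (Hdiff : 0 <= c * - ((v (nbR J j0) - 2 * v j0 + v (nbL j0)) / h))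
    by (apply Rmult_le_pos; lra).
  specialize (Hres j0 Hj0 Hpos). unfold implicit_heat in Hres. lra.
Qed.

Lemma grid_max_principle tau c h I J (w : nat -> nat -> R) :
  0 < tau -> 0 <= c -> 0 < h ->
  (forall j, (j <= J)%nat -> w O j <= 0) ->
  (forall i j, (i < I)%nat -> (j <= J)%nat -> 0 < w (S i) j ->
     implicit_heat tau c h J (w i) (w (S i)) j <= 0) ->
  forall i j, (i <= I)%nat -> (j <= J)%nat -> w i j <= 0.
Proof.
  intros Htau Hc Hh H0 Hstep i.
  induction i as [|i IH]; intros j Hi Hj; [now apply H0|].
  apply (row_max_principle tau c h J (w i)); [exact Htau | exact Hc | exact Hh | | | exact Hj].
  - intros k Hk. apply IH; lia.
  - intros k Hk. apply Hstep; lia.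
Qed.

Lemma dt_pos T I : 0 < T -> (0 < I)%nat -> 0 < dt T I.
Proof. intros; unfold dt; apply Rdiv_lt_0_compat; [lra | apply lt_0_INR; lia]. Qed.

Lemma dx2_pos J : (0 < J)%nat -> 0 < dx J ^ 2.
Proof. intros; unfold dx; apply pow_lt, Rdiv_lt_0_compat; [lra | apply lt_0_INR; lia]. Qed.

Lemma diffusion_nonneg sigma : 0 <= sigma ^ 2 / 2.
Proof. assert (0 <= sigma ^ 2) by (rewrite <- Rsqr_pow2; apply Rle_0_sqr). lra. Qed.

Lemma xg_in J j : (0 < J)%nat -> (j <= J)%nat -> 0 <= xg J j <= 1.
Proof.
  intros hJ Hj. unfold xg, dx.
  assert (0 < INR J) by (apply lt_0_INR; lia).
  assert (INR j <= INR J) by (apply le_INR; lia).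
  assert (0 <= INR j) by apply pos_INR.
  replace (INR j * (1 / INR J)) with (INR j / INR J) by (field; lra).
  split; [apply Rle_mult_inv_pos; lra|].
  apply Rmult_le_reg_r with (INR J); [lra|].
  replace (INR j / INR J * INR J) with (INR j) by (field; lra). lra.
Qed.

Lemma is_Psi_step T sigma I J m0 f phi psi : is_Psi T sigma I J m0 f phi psi ->
  forall i j, (i < I)%nat -> (j <= J)%nat ->
  implicit_heat (dt T I) (sigma ^ 2 / 2) (dx J ^ 2) J (psi i) (psi (S i)) j
  = / sigma ^ 2 * f (xg J j) (phi (S i) j * psi (S i) j) * psi (S i) j.
Proof. intros [_ Hs] i j Hi Hj. exact (Hs i j Hi Hj). Qed.

(* hat Psi(phi) >= 0: maximum principle for -psi. *)
Lemma psi_nonneg T sigma I J m0 f eps phi psi :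
  0 < T -> 0 < sigma -> (0 < I)%nat -> (0 < J)%nat -> 0 < eps ->
  (forall x, 0 <= x <= 1 -> 0 <= m0 x) ->
  (forall x y, 0 <= x <= 1 -> f x y <= 0) ->
  in_Meps eps I J phi -> is_Psi T sigma I J m0 f phi psi ->
  forall i j, (i <= I)%nat -> (j <= J)%nat -> 0 <= psi i j.
Proof.
  intros hT hsigma hI hJ heps hm0 hfneg Hphi Hpsi i j Hi Hj.
  enough (- psi i j <= 0) by lra.
  apply (grid_max_principle (dt T I) (sigma ^ 2 / 2) (dx J ^ 2) I J
           (fun i j => - psi i j));
    auto using dt_pos, diffusion_nonneg, dx2_pos.
  - intros k Hk. destruct Hpsi as [H0 _]. rewrite H0 by exact Hk.
    assert (Hphi0 := Hphi O k ltac:(lia) Hk).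
    assert (0 <= m0 (xg J k) / phi O k)
      by (apply Rle_mult_inv_pos; [apply hm0, xg_in; [exact hJ | exact Hk] | lra]).
    lra.
  - intros i' k Hi' Hk Hneg.
    rewrite implicit_heat_opp, (is_Psi_step T sigma I J m0 f phi psi Hpsi)
      by auto using dt_pos, dx2_pos.
    assert (Hs : 0 < / sigma ^ 2) by (apply Rinv_0_lt_compat, pow_lt; lra).
    assert (HF := hfneg (xg J k) (phi (S i') k * psi (S i') k) (xg_in J k hJ Hk)).
    set (F := f (xg J k) (phi (S i') k * psi (S i') k)) in *.
    assert (/ sigma ^ 2 * F <= 0) by nra.
    nra.
Qed.

Lemma reaction_difference_nonpos s F1 F2 p1 p2 :
  0 < s -> F2 <= F1 -> F2 <= 0 -> 0 <= p1 <= p2 ->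
  / s * F2 * p2 - / s * F1 * p1 <= 0.
Proof.
  intros Hs HF HF2 Hp.
  assert (0 < / s) by (apply Rinv_0_lt_compat; lra).
  replace (/ s * F2 * p2 - / s * F1 * p1)
    with (/ s * (F2 * (p2 - p1) + (F2 - F1) * p1)) by ring.
  assert (F2 * (p2 - p1) + (F2 - F1) * p1 <= 0) by nra. nra.
Qed.

Lemma div_antitone m a b : 0 <= m -> 0 < a -> a <= b -> m / b <= m / a.
Proof.
  intros Hm Ha Hab. unfold Rdiv.
  apply Rmult_le_compat_l; [exact Hm|]. apply Rinv_le_contravar; lra.
Qed.

Theorem proposition10
  (T sigma : R) (m0 : R -> R) (f : R -> R -> R) (I J : nat) (eps : R)
  (hT : 0 < T) (hsigma : 0 < sigma)
  (hm0b : exists M, forall x, 0 <= x <= 1 -> Rabs (m0 x) <= M)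
  (hm0 : forall x, 0 <= x <= 1 -> 0 <= m0 x)
  (hfcont : forall x y, 0 <= x <= 1 -> forall e, 0 < e -> exists d, 0 < d /\
      forall x' y', 0 <= x' <= 1 -> Rabs (x' - x) < d -> Rabs (y' - y) < d ->
        Rabs (f x' y' - f x y) < e)
  (hfmono : forall x y1 y2, 0 <= x <= 1 -> y1 <= y2 -> f x y2 <= f x y1)
  (hfb : exists M, forall x y, 0 <= x <= 1 -> Rabs (f x y) <= M)
  (hfneg : forall x y, 0 <= x <= 1 -> f x y <= 0)
  (hI : (0 < I)%nat) (hJ : (0 < J)%nat) (heps : 0 < eps) :
  forall phi1 phi2 psi1 psi2 : nat -> nat -> R,
    in_Meps eps I J phi1 -> in_Meps eps I J phi2 ->
    (forall i j, (i <= I)%nat -> (j <= J)%nat -> phi1 i j <= phi2 i j) ->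
    is_Psi T sigma I J m0 f phi1 psi1 ->
    is_Psi T sigma I J m0 f phi2 psi2 ->
    forall i j, (i <= I)%nat -> (j <= J)%nat -> psi2 i j <= psi1 i j.
Proof.
  intros phi1 phi2 psi1 psi2 Hphi1 Hphi2 Hle Hpsi1 Hpsi2 i j Hi Hj.
  assert (Hdt := dt_pos T I hT hI). assert (Hdx := dx2_pos J hJ).
  assert (Hnn := psi_nonneg T sigma I J m0 f eps phi1 psi1
                hT hsigma hI hJ heps hm0 hfneg Hphi1 Hpsi1).
  enough (psi2 i j - psi1 i j <= 0) by lra.
  apply (grid_max_principle (dt T I) (sigma ^ 2 / 2) (dx J ^ 2) I J
           (fun i j => psi2 i j - psi1 i j)); auto using diffusion_nonneg.
  - intros k Hk. destruct Hpsi1 as [H1 _], Hpsi2 as [H2 _].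
    rewrite H1, H2 by exact Hk.
    specialize (Hphi1 O k ltac:(lia) Hk). specialize (Hle O k ltac:(lia) Hk).
    assert (m0 (xg J k) / phi2 O k <= m0 (xg J k) / phi1 O k)
      by (apply div_antitone; [apply hm0, xg_in; [exact hJ | exact Hk] | lra | exact Hle]).
    lra.
  - intros i' k Hi' Hk Hgt.
    rewrite implicit_heat_sub, (is_Psi_step T sigma I J m0 f phi1 psi1 Hpsi1),
      (is_Psi_step T sigma I J m0 f phi2 psi2 Hpsi2) by auto.
    assert (Hx := xg_in J k hJ Hk).
    assert (Hp1 := Hnn (S i') k ltac:(lia) Hk).
    assert (Hphi := Hphi1 (S i') k ltac:(lia) Hk). assert (Hl := Hle (S i') k ltac:(lia) Hk).
    apply reaction_difference_nonpos; [apply pow_lt; lra | | apply hfneg; exact Hx | lra].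
    apply hfmono; [exact Hx | nra].
Qed.
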